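(* Let $\mathbf{E}\in\mathbb{K}^{m\times\sigma}$ with $\sigma\ge 2$, let $\mathbf{J}\in\mathbb{K}^{\sigma\times\sigma}$ be upper triangular, let $\mathbf{E}^{(1)}$ be the first $\lceil\sigma/2\rceil$ columns of $\mathbf{E}$ and $\mathbf{J}^{(1)}$, $\mathbf{J}^{(2)}$ the leading $\lceil\sigma/2\rceil\times\lceil\sigma/2\rceil$ and trailing $\lfloor\sigma/2\rfloor\times\lfloor\sigma/2\rfloor$ principal submatrices of $\mathbf{J}$. Let $\mathbf{s}\in\mathbb{Z}^m$, let $\mathbf{P}^{(1)}$ be the $\mathbf{s}$-Popov interpolation basis for $(\mathbf{E}^{(1)},\mathbf{J}^{(1)})$ with $\mathbf{s}$-minimal degree $\boldsymbol{\delta}^{(1)}$, let $\mathbf{E}^{(2)}$ be the last $\lfloor\sigma/2\rfloor$ columns of $\mathbf{P}^{(1)}\cdot\mathbf{E}$ (the matrix whose $i$-th row is the $i$-th row of $\mathbf{P}^{(1)}$ applied to $\mathbf{E}$), and let $\mathbf{P}^{(2)}$ be the $(\mathbf{s}+\boldsymbol{\delta}^{(1)})$-Popov interpolation basis for $(\mathbf{E}^{(2)},\mathbf{J}^{(2)})$ with $(\mathbf{s}+\boldsymbol{\delta}^{(1)})$-minimal degree $\boldsymbol{\delta}^{(2)}$. Then $\mathbf{P}^{(2)}\mathbf{P}^{(1)}$ is an $\mathbf{s}$-reduced interpolation basis for $(\mathbf{E},\mathbf{J})$, and the $\mathbf{s}$-minimal degree of $(\mathbf{E},\mathbf{J})$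 is $\boldsymbol{\delta}^{(1)}+\boldsymbol{\delta}^{(2)}$.
   Context: For $p\in\mathbb{K}[X]$ and $\mathbf{e}\in\mathbb{K}^{1\times\sigma}$, $p\cdot\mathbf{e}=\mathbf{e}\,p(\mathbf{J})$; for $\mathbf{p}=(p_1,\dots,p_m)$, $\mathbf{p}\cdot\mathbf{E}=\sum_i p_i\cdot\mathbf{e}_i$ with $\mathbf{e}_i$ the rows of $\mathbf{E}$. An interpolant for $(\mathbf{E},\mathbf{J})$ is $\mathbf{p}$ with $\mathbf{p}\cdot\mathbf{E}=0$; an interpolation basis is a matrix in $\mathbb{K}[X]^{m\times m}$ whose rows form a basis of the (free, rank $m$) module of interpolants. For $\mathbf{s}\in\mathbb{Z}^m$: the $\mathbf{s}$-degree of a nonzero row $[p_j]$ is $\max_j(\deg p_j+s_j)$; the $\mathbf{s}$-leading matrix of a full-rank $\mathbf{P}$ with row $\mathbf{s}$-degrees $d_i$ has $(i,j)$ entry the coefficient of degree $d_i-s_j$ of $p_{ij}$; $\mathbf{P}$ is $\mathbf{s}$-reduced if this matrix has full row rank. The $\mathbf{s}$-pivot index of a row is the largest $j$ attaining its $\mathbf{s}$-degree and $p_j$ its pivot entry. A nonsingular matrix is in $\mathbf{s}$-Popov form if its $\mathbf{s}$-pivot entries are monic and on the diagonal and in each column nonpivot entries have degree less than the pivot entry. The $\mathbf{s}$-Popov interpolation basis is the unique interpolation basis in $\mathbf{s}$-Popov form, and the $\mathbf{s}$-minimal degree is the tuple of degrees of its diagonal entries. *)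

From HB Require Import structures.
From mathcomp Require Import all_boot all_order all_algebra.
Set Implicit Arguments. Unset Strict Implicit. Unset Printing Implicit Defensive.
Import Order.TTheory GRing.Theory Num.Theory.
Local Open Scope ring_scope.

Section Defs.
Variable K : fieldType.

Definition pact n (J : 'M[K]_n) (p : {poly K}) (e : 'rV[K]_n) : 'rV[K]_n :=
  \sum_(i < size p) p`_i *: iter i (fun v => v *m J) e.

Definition applymx k m n (J : 'M[K]_n) (P : 'M[{poly K}]_(k, m))
    (E : 'M[K]_(m, n)) : 'M[K]_(k, n) :=
  \matrix_(i < k, l < n) (\sum_(j < m) pact J (P i j) (row j E)) 0 l.

Definition interpolant m n (E : 'M[K]_(m, n)) (J : 'M[K]_n)
    (p : 'rV[{poly K}]_m) : Prop := applymx J p E = 0.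

Definition interp_basis m n (E : 'M[K]_(m, n)) (J : 'M[K]_n)
    (P : 'M[{poly K}]_m) : Prop :=
  [/\ forall i, interpolant E J (row i P),
      forall p, interpolant E J p -> exists u : 'rV[{poly K}]_m, p = u *m P
    & forall u : 'rV[{poly K}]_m, u *m P = 0 -> u = 0].

Definition pdeg (p : {poly K}) : int := ((size p).-1)%:Z.

(* s-degree of a row; the default value is only relevant for the zero row
   and is below every candidate value *)
Definition rdeg m (s : 'I_m -> int) (p : 'rV[{poly K}]_m) : int :=
  \big[Num.max/ (- \sum_(k < m) `|s k|)]_(j < m | p 0 j != 0) (pdeg (p 0 j) + s j).

Definition coefZ (p : {poly K}) (d : int) : K :=
  match d with Posz n => p`_n | Negz _ => 0 end.

Definition lmat k m (s : 'I_m -> int) (P : 'M[{poly K}]_(k, m)) : 'M[K]_(k, m) :=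
  \matrix_(i < k, j < m) coefZ (P i j) (rdeg s (row i P) - s j).

Definition sreduced m (s : 'I_m -> int) (P : 'M[{poly K}]_m) : Prop :=
  \det P != 0 /\ row_free (lmat s P).

Definition is_pivot m (s : 'I_m -> int) (p : 'rV[{poly K}]_m) (j : 'I_m) : Prop :=
  [/\ p 0 j != 0, pdeg (p 0 j) + s j = rdeg s p
    & forall k : 'I_m, (j < k)%N -> p 0 k != 0 -> pdeg (p 0 k) + s k < rdeg s p].

Definition popov m (s : 'I_m -> int) (P : 'M[{poly K}]_m) : Prop :=
  [/\ \det P != 0,
      forall i, is_pivot s (row i P) i,
      forall i, P i i \is monic
    & forall i j, i != j -> (size (P i j) < size (P j j))%N].

Definition popov_basis m n (s : 'I_m -> int) (E : 'M[K]_(m, n)) (J : 'M[K]_n)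
    (P : 'M[{poly K}]_m) : Prop :=
  interp_basis E J P /\ popov s P.

Definition diagdeg m (P : 'M[{poly K}]_m) (i : 'I_m) : nat := (size (P i i)).-1.

Definition upper_tri n (J : 'M[K]_n) : Prop :=
  forall i j : 'I_n, (j < i)%N -> J i j = 0.

End Defs.

Lemma half_split (n : nat) : n = (uphalf n + n./2)%N.
Proof. by rewrite uphalf_half -addnA addnn odd_double_half. Qed.

From Pilot Require Import Defs.
From HB Require Import structures.
From mathcomp Require Import all_boot all_order all_algebra.
From mathcomp Require Import zify.
Set Implicit Arguments. Unset Strict Implicit. Unset Printing Implicit Defensive.
Import Order.TTheory GRing.Theory Num.Theory.
Local Open Scope ring_scope.

(* Applying [p] to a row [e] is [e *m p(J)]; for upper triangular [J] the
   matrix [p(J)] is block upper triangular, so the first half of the columns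
   of [P . E] only depends on the first half of [E] and [J^(1)], and once the
   first half vanishes the second half only depends on [J^(2)].  Hence [P2 P1]
   is an interpolation basis.  For the degrees: with [t] the row s-degrees of
   [P1], the s-leading coefficient of [u P1] is the product of the t-leading
   row of [u] with the s-leading matrix of [P1], which is lower triangular
   with nonzero diagonal when the s-pivots of [P1] lie on its diagonal.  So
   the s-pivot index of [u P1] is the t-pivot index [i] of [u], and its
   degree is [deg u_i + deg P1_ii].  Since [t = s + delta1], this makes the
   s-pivots of [P2 P1] diagonal with degrees [delta1 + delta2]; the same
   argument applied to change-of-basis rows shows that two bases with
   diagonal s-pivots have the same diagonal degrees. *)

Section EvalMx.
Variable K : fieldType.

(* [horner_mx] is only available for nonempty square matrices. *)
Definition eval_mx n (J : 'M[K]_n) (p : {poly K}) : 'M[K]_n :=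
  \sum_(i < size p) p`_i *: J ^+ i.

Lemma eval_mxE n (J : 'M[K]_n.+1) p : eval_mx J p = horner_mx J p.
Proof.
rewrite /horner_mx /horner_morph horner_coef size_map_inj_poly; last first.
- by apply/matrixP=> i j; rewrite !mxE mul0rn.
- by move=> a b /matrixP/(_ ord0 ord0); rewrite !mxE eqxx /= !mulr1n.
by apply: eq_bigr => i _; rewrite coef_map /= -mul_scalar_mx.
Qed.

Lemma eval_mx0 n (J : 'M[K]_n) : eval_mx J 0 = 0.
Proof. by rewrite /eval_mx size_poly0 big_ord0. Qed.

Lemma eval_mxD n (J : 'M[K]_n) p q : eval_mx J (p + q) = eval_mx J p + eval_mx J q.
Proof. by case: n J => [|n] J; rewrite ?flatmx0 // !eval_mxE rmorphD. Qed.

Lemma eval_mxM n (J : 'M[K]_n) p q : eval_mx J (p * q) = eval_mx J p *m eval_mx J q.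
Proof. by case: n J => [|n] J; rewrite ?flatmx0 // !eval_mxE rmorphM. Qed.

Lemma eval_mx_sum n (J : 'M[K]_n) I (r : seq I) (P : pred I) (F : I -> {poly K}) :
  eval_mx J (\sum_(i <- r | P i) F i) = \sum_(i <- r | P i) eval_mx J (F i).
Proof. exact: (big_morph _ (@eval_mxD n J) (eval_mx0 J)). Qed.

Lemma pactE n (J : 'M[K]_n) p e : pact J p e = e *m eval_mx J p.
Proof.
have iterE i : iter i (fun v => v *m J) e = e *m J ^+ i.
  by elim: i => [|i /= ->]; rewrite ?expr0 ?mulmx1 // exprSr mulmxA.
rewrite /pact mulmx_sumr; apply: eq_bigr => i _.
by rewrite iterE scalemxAr.
Qed.

Lemma row_applymx k m n (J : 'M[K]_n) (P : 'M[{poly K}]_(k, m)) E i :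
  row i (applymx J P E) = \sum_(j < m) row j E *m eval_mx J (P i j).
Proof.
apply/rowP => l; rewrite !mxE !summxE; apply: eq_bigr => j _.
by rewrite pactE.
Qed.

Lemma applymxM k m m' n (J : 'M[K]_n) (A : 'M[{poly K}]_(k, m))
    (B : 'M[{poly K}]_(m, m')) E :
  applymx J (A *m B) E = applymx J A (applymx J B E).
Proof.
apply/row_matrixP => i; rewrite !row_applymx.
under eq_bigr => j _ do rewrite mxE eval_mx_sum mulmx_sumr.
rewrite exchange_big /=; apply: eq_bigr => l _.
rewrite row_applymx mulmx_suml; apply: eq_bigr => j _.
by rewrite mulrC eval_mxM mulmxA.
Qed.

Lemma applymx_row k m n (J : 'M[K]_n) (P : 'M[{poly K}]_(k, m)) E i :
  applymx J (row i P) E = row i (applymx J P E).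
Proof.
by apply/rowP => l; rewrite !mxE !summxE; apply: eq_bigr => j _; rewrite mxE.
Qed.

Lemma applymx0 k m n (J : 'M[K]_n) (P : 'M[{poly K}]_(k, m)) : applymx J P 0 = 0.
Proof.
apply/row_matrixP => i; rewrite row_applymx row0 big1 // => j _.
by rewrite row0 mul0mx.
Qed.

Lemma row_lsubmx (R : Type) k a b (A : 'M[R]_(k, a + b)) i :
  row i (lsubmx A) = lsubmx (row i A).
Proof. by apply/rowP => l; rewrite !mxE. Qed.

Lemma row_rsubmx (R : Type) k a b (A : 'M[R]_(k, a + b)) i :
  row i (rsubmx A) = rsubmx (row i A).
Proof. by apply/rowP => l; rewrite !mxE. Qed.

Section BlockUpper.
Variables (a b : nat) (J : 'M[K]_(a + b)).
Hypothesis J_upper : dlsubmx J = 0.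

Lemma exp_block_upper i :
  exists X, J ^+ i = block_mx (ulsubmx J ^+ i) X 0 (drsubmx J ^+ i).
Proof.
elim: i => [|i [X IH]]; first by exists 0; rewrite !expr0 -scalar_mx_block.
exists (ulsubmx J ^+ i *m ursubmx J + X *m drsubmx J).
rewrite exprSr IH -mulmxE -[X in _ *m X](submxK J) J_upper mulmx_block.
by rewrite !mulmx0 !mul0mx !addr0 add0r !mulmxE -!exprSr.
Qed.

Lemma eval_mx_block_upper p :
  exists X, eval_mx J p = block_mx (eval_mx (ulsubmx J) p) X 0 (eval_mx (drsubmx J) p).
Proof.
rewrite /eval_mx; elim/big_rec3: _ => [|i A B C _ [X IH]].
  by exists 0; rewrite block_mx0.
have [Y ->] := exp_block_upper i.
exists (p`_i *: Y + X); rewrite IH scale_block_mx add_block_mx.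
by rewrite scaler0 addr0.
Qed.

Lemma lsubmx_mul_eval k (e : 'M[K]_(k, a + b)) p :
  lsubmx (e *m eval_mx J p) = lsubmx e *m eval_mx (ulsubmx J) p.
Proof.
have [X ->] := eval_mx_block_upper p.
by rewrite -{1}(hsubmxK e) mul_row_block row_mxKl mulmx0 addr0.
Qed.

Lemma rsubmx_mul_eval k (e : 'M[K]_(k, a + b)) p : lsubmx e = 0 ->
  rsubmx (e *m eval_mx J p) = rsubmx e *m eval_mx (drsubmx J) p.
Proof.
move=> e0; have [X ->] := eval_mx_block_upper p.
by rewrite -{1}(hsubmxK e) e0 mul_row_block row_mxKr !mul0mx add0r.
Qed.

Lemma lsubmx_applymx k m (P : 'M[{poly K}]_(k, m)) E :
  lsubmx (applymx J P E) = applymx (ulsubmx J) P (lsubmx E).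
Proof.
apply/row_matrixP => i; rewrite row_lsubmx !row_applymx linear_sum /=.
by apply: eq_bigr => j _; rewrite lsubmx_mul_eval row_lsubmx.
Qed.

Lemma rsubmx_applymx k m (P : 'M[{poly K}]_(k, m)) E : lsubmx E = 0 ->
  rsubmx (applymx J P E) = applymx (drsubmx J) P (rsubmx E).
Proof.
move=> E0; apply/row_matrixP => i; rewrite row_rsubmx !row_applymx linear_sum /=.
apply: eq_bigr => j _; rewrite rsubmx_mul_eval ?row_rsubmx //.
by rewrite -row_lsubmx E0 row0.
Qed.

Lemma interp_basis_mul_block m (E : 'M[K]_(m, a + b)) P1 P2 :
  interp_basis (lsubmx E) (ulsubmx J) P1 ->
  interp_basis (rsubmx (applymx J P1 E)) (drsubmx J) P2 ->
  interp_basis E J (P2 *m P1).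
Proof.
move=> [interp1 span1 free1] [interp2 span2 free2].
set F := applymx J P1 E.
have F_left0 : lsubmx F = 0.
  apply/row_matrixP => i; rewrite lsubmx_applymx -applymx_row row0.
  exact: interp1.
have applyF u : applymx J u F = row_mx 0 (applymx (drsubmx J) u (rsubmx F)).
  rewrite -(hsubmxK (applymx J u F)) lsubmx_applymx F_left0 applymx0.
  by rewrite rsubmx_applymx.
split.
- move=> i; rewrite /interpolant row_mul applymxM -/F applyF.
  by rewrite (interp2 i) row_mx0.
- move=> p interp_p.
  have [u p_eq] : exists u, p = u *m P1.
    by apply: span1; rewrite /interpolant -lsubmx_applymx interp_p linear0.
  have [v u_eq] : exists v, u = v *m P2.
    apply: span2; move: interp_p.
    by rewrite /interpolant p_eq applymxM -/F applyF -row_mx0 => /eq_row_mx [].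
  by exists v; rewrite p_eq u_eq mulmxA.
- by move=> u; rewrite mulmxA => /free1 /free2.
Qed.

End BlockUpper.

Lemma upper_tri_dlsubmx n a b (h : n = (a + b)%N) (J : 'M[K]_n) :
  upper_tri J -> dlsubmx (castmx (h, h) J) = 0.
Proof.
move=> J_upper; apply/matrixP => i j; rewrite !mxE castmxE; apply: J_upper => /=.
exact: leq_trans (ltn_ord j) (leq_addr _ _).
Qed.

Lemma interp_basis_mul_castmx m n a b (h : n = (a + b)%N)
    (E : 'M[K]_(m, n)) (J : 'M[K]_n) P1 P2 :
  upper_tri J ->
  interp_basis (lsubmx (castmx (erefl m, h) E)) (ulsubmx (castmx (h, h) J)) P1 ->
  interp_basis (rsubmx (castmx (erefl m, h) (applymx J P1 E)))
               (drsubmx (castmx (h, h) J)) P2 ->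
  interp_basis E J (P2 *m P1).
Proof.
move=> /(upper_tri_dlsubmx h); subst n; rewrite !castmx_id.
move=> J0; exact: (interp_basis_mul_block J0).
Qed.

End EvalMx.

(* The name [coefZ] is taken by a lemma of [poly]. *)
Local Notation coefi := Defs.coefZ.

Section Degrees.
Variable K : fieldType.
Implicit Types p q : {poly K}.

Definition deg_le p (d : int) := p != 0 -> pdeg p <= d.

Lemma pdeg_ge0 p : 0 <= pdeg p.
Proof. by []. Qed.

Lemma coefi0 d : coefi (0 : {poly K}) d = 0.
Proof. by case: d => [n|n] //=; rewrite coef0. Qed.

Lemma coefi_gt p d : (p != 0 -> pdeg p < d) -> coefi p d = 0.
Proof.
have [-> _|p_nz /(_ isT)] := eqVneq p 0; first exact: coefi0.
case: d => [n|n] //= lt_pn; apply: nth_default.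
by move: lt_pn; rewrite /pdeg ltz_nat; case: (size p).
Qed.

Lemma coefi_pdeg p : coefi p (pdeg p) = lead_coef p.
Proof. by []. Qed.

Lemma coefiD p q d : coefi (p + q) d = coefi p d + coefi q d.
Proof. by case: d => [n|n] //=; rewrite ?coefD ?addr0. Qed.

Lemma coefi_sum I (r : seq I) (P : pred I) (F : I -> {poly K}) d :
  coefi (\sum_(i <- r | P i) F i) d = \sum_(i <- r | P i) coefi (F i) d.
Proof. exact: (big_morph _ (fun p q => coefiD p q d) (coefi0 d)). Qed.

Lemma deg_le_coefi p d : deg_le p d -> coefi p d != 0 -> p != 0 /\ pdeg p = d.
Proof.
move=> p_le c_nz; have p_nz : p != 0 by apply: contraNneq c_nz => ->; rewrite coefi0.
split => //; apply/eqP; rewrite eq_le p_le //=; apply: contraNT c_nz.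
by rewrite -ltNge => lt_dp; rewrite coefi_gt.
Qed.

Lemma deg_le_coefi0 p d : deg_le p d -> coefi p d = 0 -> p != 0 -> pdeg p < d.
Proof.
move=> p_le c0 p_nz; rewrite lt_neqAle p_le // andbT.
apply/eqP => d_eq; move: c0; rewrite -d_eq coefi_pdeg => /eqP.
by rewrite lead_coef_eq0 (negPf p_nz).
Qed.

Lemma deg_le_nat p (n : nat) : deg_le p n%:Z <-> (size p <= n.+1)%N.
Proof.
split => [p_le|p_le _]; last by rewrite /pdeg lez_nat; move: p_le; case: (size p).
have [->|p_nz] := eqVneq p 0; first by rewrite size_poly0.
by move: (p_le p_nz); rewrite /pdeg lez_nat; case: (size p).
Qed.

Lemma deg_le_Negz p n : deg_le p (Negz n) -> p = 0.
Proof.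
move=> p_le; apply/eqP; apply: contraT => /p_le.
by rewrite leNgt (lt_le_trans _ (pdeg_ge0 p)).
Qed.

Lemma deg_le0 d : deg_le 0 d.
Proof. by rewrite /deg_le eqxx. Qed.

Lemma deg_leD p q d : deg_le p d -> deg_le q d -> deg_le (p + q) d.
Proof.
case: d => [n|n]; last first.
  by move=> /deg_le_Negz -> /deg_le_Negz ->; rewrite addr0; apply: deg_le0.
move=> /deg_le_nat p_le /deg_le_nat q_le; apply/deg_le_nat.
by apply: leq_trans (size_polyD p q) _; rewrite geq_max p_le q_le.
Qed.

Lemma deg_le_sum I (r : seq I) (P : pred I) (F : I -> {poly K}) d :
  (forall i, P i -> deg_le (F i) d) -> deg_le (\sum_(i <- r | P i) F i) d.
Proof.
move=> F_le; elim/big_rec: _ => [|i x Pi x_le]; first exact: deg_le0.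
exact: deg_leD (F_le i Pi) x_le.
Qed.

Lemma coefM_top p q (a b : nat) : (size p <= a.+1)%N -> (size q <= b.+1)%N ->
  (p * q)`_(a + b) = p`_a * q`_b.
Proof.
move=> p_le q_le; rewrite coefM (bigD1 (Ordinal (leq_addr b a.+1))) //= addKn.
rewrite big1 ?addr0 // => j /eqP/val_eqP /= j_neq.
have [lt_ja|le_aj] := ltnP j a.
  rewrite [q`__]nth_default ?mulr0 //; apply: leq_trans q_le _.
  by move: lt_ja; case: j {j_neq} => j /= _; lia.
rewrite [p`__]nth_default ?mul0r //; apply: leq_trans p_le _.
by rewrite ltn_neqAle eq_sym j_neq.
Qed.

Lemma deg_leM p q a b : deg_le p a -> deg_le q b ->
  deg_le (p * q) (a + b) /\ coefi (p * q) (a + b) = coefi p a * coefi q b.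
Proof.
have [-> _ _|p_nz] := eqVneq p 0.
  by rewrite !mul0r !coefi0 mul0r; split=> //; apply: deg_le0.
have [-> _ _|q_nz] := eqVneq q 0.
  by rewrite !mulr0 !coefi0 mulr0; split=> //; apply: deg_le0.
case: a => [a|a]; last by move/deg_le_Negz/eqP; rewrite (negPf p_nz).
case: b => [b|b]; last by move=> _ /deg_le_Negz/eqP; rewrite (negPf q_nz).
move=> /deg_le_nat p_le /deg_le_nat q_le; split; last by rewrite -PoszD /= coefM_top.
apply/deg_le_nat; rewrite size_mul // -subn1 leq_subLR add1n -addnS -addSn.
exact: leq_add.
Qed.

End Degrees.

Section Pivots.
Variable K : fieldType.

Lemma rdeg_ge m (s : 'I_m -> int) (p : 'rV[{poly K}]_m) j :
  p 0 j != 0 -> pdeg (p 0 j) + s j <= rdeg s p.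
Proof. by move=> p_nz; apply: le_bigmax_cond. Qed.

Lemma deg_le_rdeg m (s : 'I_m -> int) (p : 'rV[{poly K}]_m) j :
  deg_le (p 0 j) (rdeg s p - s j).
Proof. by move=> p_nz; rewrite lerBrDr rdeg_ge. Qed.

Lemma rdegE m (s : 'I_m -> int) (p : 'rV[{poly K}]_m) j0 D :
  p 0 j0 != 0 -> pdeg (p 0 j0) + s j0 = D ->
  (forall j, p 0 j != 0 -> pdeg (p 0 j) + s j <= D) -> rdeg s p = D.
Proof.
move=> p_nz D_eq le_D; apply/eqP; rewrite eq_le -{2}D_eq rdeg_ge // andbT.
apply: bigmax_le => //.
have sum_ge : `|s j0| <= \sum_(k < m) `|s k|.
  by rewrite (bigD1 j0) //= lerDl sumr_ge0.
have s_le : s j0 <= D by rewrite -D_eq lerDr pdeg_ge0.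
have norm_ge : - `|s j0| <= s j0 by rewrite lerNl ler_normr lexx orbT.
by rewrite (le_trans _ (le_trans norm_ge s_le)) // lerN2.
Qed.

Lemma pivot_uniq m (s : 'I_m -> int) (p : 'rV[{poly K}]_m) i j :
  is_pivot s p i -> is_pivot s p j -> i = j.
Proof.
case=> nz_i deg_i gt_i [nz_j deg_j gt_j]; case: (ltngtP i j) => ij.
- by have := gt_i j ij nz_j; rewrite deg_j ltxx.
- by have := gt_j i ij nz_i; rewrite deg_i ltxx.
- exact: val_inj.
Qed.

Lemma exists_pivot m (s : 'I_m -> int) (p : 'rV[{poly K}]_m) :
  p != 0 -> exists j, is_pivot s p j.
Proof.
move=> p_nz; set F := fun j => pdeg (p 0 j) + s j.
have [j1 pj1_nz] : exists j, p 0 j != 0.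
  apply/existsP; apply: contraNT p_nz => /existsPn p0.
  by apply/eqP/rowP => j; rewrite mxE; apply/eqP; rewrite -[_ == _]negbK p0.
have [jm pjm_nz max_jm] := @arg_maxP _ _ _ j1 (fun j => p 0 j != 0) F pj1_nz.
have jm_ok : (p 0 jm != 0) && (F jm == F jm) by rewrite pjm_nz eqxx.
have [j0 /andP[pj0_nz /eqP Fj0] max_j0] := @arg_maxnP _ jm
  (fun j => (p 0 j != 0) && (F j == F jm)) val jm_ok.
have rdeg_p : rdeg s p = F jm by apply: (rdegE pj0_nz Fj0) => j /max_jm.
exists j0; split; rewrite ?rdeg_p //.
move=> k lt_j0k pk_nz; rewrite -/(F k) lt_neqAle.
apply/andP; split; last exact: max_jm.
apply: contraTneq lt_j0k => Fk; rewrite -leqNgt.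
by apply: (max_j0 k); rewrite pk_nz Fk eqxx.
Qed.

Lemma lmat_pivot k m (s : 'I_m -> int) (P : 'M[{poly K}]_(k, m)) i j :
  is_pivot s (row i P) j -> lmat s P i j = lead_coef (P i j).
Proof. by case=> _ deg_j _; rewrite mxE -deg_j mxE addrK. Qed.

Lemma lmat_pivot_gt k m (s : 'I_m -> int) (P : 'M[{poly K}]_(k, m)) i j (l : 'I_m) :
  is_pivot s (row i P) j -> (j < l)%N -> lmat s P i l = 0.
Proof.
case=> _ _ gt_j lt_jl; rewrite mxE; apply: coefi_gt => P_nz.
by rewrite ltrBrDr; have := gt_j l lt_jl; rewrite !mxE; apply.
Qed.

Section DiagonalPivots.
Variables (m : nat) (s : 'I_m -> int) (R : 'M[{poly K}]_m).
Hypothesis pivR : forall i, is_pivot s (row i R) i.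

Lemma lmat_diag_pivot_trig : is_trig_mx (lmat s R).
Proof. by apply/is_trig_mxP => i j; apply: lmat_pivot_gt. Qed.

Lemma lmat_diag_pivot_row_free : row_free (lmat s R).
Proof.
rewrite row_free_unit unitmxE det_trig ?lmat_diag_pivot_trig //.
rewrite unitfE prodf_seq_neq0; apply/allP => i _ /=.
by rewrite (lmat_pivot (pivR i)) lead_coef_eq0; case: (pivR i); rewrite mxE.
Qed.

Lemma lmat_mulmx (t : 'I_m -> int) (u : 'rV[{poly K}]_m) l :
  (forall i, t i = rdeg s (row i R)) ->
  deg_le ((u *m R) 0 l) (rdeg t u - s l) /\
  coefi ((u *m R) 0 l) (rdeg t u - s l) = (lmat t u *m lmat s R) 0 l.
Proof.
move=> t_rdeg; set D := rdeg t u.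
have term i : deg_le (u 0 i * R i l) (D - s l) /\
    coefi (u 0 i * R i l) (D - s l) =
    coefi (u 0 i) (D - t i) * coefi (R i l) (t i - s l).
  have -> : D - s l = (D - t i) + (t i - s l) by rewrite addrA subrK.
  apply: deg_leM; first exact: deg_le_rdeg.
  by rewrite t_rdeg; have := @deg_le_rdeg m s (row i R) l; rewrite mxE.
rewrite mxE; split; first by apply: deg_le_sum => i _; exact: (term i).1.
rewrite coefi_sum mxE; apply: eq_bigr => i _.
by rewrite (term i).2 !mxE row_id t_rdeg.
Qed.

Lemma pivot_mulmx (t : 'I_m -> int) (u : 'rV[{poly K}]_m) i0 :
  (forall i, t i = rdeg s (row i R)) -> is_pivot t u i0 ->
  is_pivot s (u *m R) i0 /\ pdeg ((u *m R) 0 i0) = pdeg (u 0 i0) + pdeg (R i0 i0).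
Proof.
move=> t_rdeg piv_u; have [u_nz deg_u _] := piv_u.
have lead_gt (l : 'I_m) : (i0 < l)%N -> (lmat t u *m lmat s R) 0 l = 0.
  move=> lt_i0l; rewrite mxE big1 // => i _.
  have [lt_i0i|le_ii0] := ltnP i0 i.
    by rewrite (lmat_pivot_gt _ lt_i0i) ?row_id ?mul0r.
  by rewrite (lmat_pivot_gt (pivR i)) ?mulr0 // (leq_ltn_trans le_ii0).
have lead_i0 : (lmat t u *m lmat s R) 0 i0 != 0.
  rewrite mxE (bigD1 i0) //= big1 ?addr0; last first.
    move=> i ne_ii0; have [lt_i0i|le_ii0] := ltnP i0 i.
      by rewrite (lmat_pivot_gt _ lt_i0i) ?row_id ?mul0r.
    rewrite (lmat_pivot_gt (pivR i)) ?mulr0 // ltn_neqAle le_ii0 andbT.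
    by apply: contra ne_ii0 => /eqP/val_inj ->.
  rewrite (lmat_pivot (pivR i0)) lmat_pivot ?row_id // mulf_neq0 ?lead_coef_eq0 //.
  by case: (pivR i0); rewrite mxE.
have [uR_nz deg_uR] : (u *m R) 0 i0 != 0 /\ pdeg ((u *m R) 0 i0) = rdeg t u - s i0.
  apply: deg_le_coefi (lmat_mulmx u i0 t_rdeg).1 _.
  by rewrite (lmat_mulmx u i0 t_rdeg).2.
have rdeg_uR : rdeg s (u *m R) = rdeg t u.
  apply: (rdegE uR_nz); first by rewrite deg_uR subrK.
  by move=> j uRj_nz; rewrite -lerBrDr; apply: (lmat_mulmx u j t_rdeg).1.
split.
  split; rewrite ?rdeg_uR ?deg_uR ?subrK // => l lt_i0l uRl_nz.
  rewrite -ltrBrDr; apply: deg_le_coefi0 (lmat_mulmx u l t_rdeg).1 _ uRl_nz.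
  by rewrite (lmat_mulmx u l t_rdeg).2 lead_gt.
rewrite deg_uR -deg_u t_rdeg; case: (pivR i0) => _ <- _.
by rewrite mxE addrA addrK.
Qed.

End DiagonalPivots.

Lemma pivot_diag_mulmx m (s : 'I_m -> int) (U R : 'M[{poly K}]_m) :
  (forall i, is_pivot s (row i R) i) ->
  (forall i, is_pivot (fun j => s j + pdeg (R j j)) (row i U) i) ->
  forall i, is_pivot s (row i (U *m R)) i /\
            pdeg ((U *m R) i i) = pdeg (U i i) + pdeg (R i i).
Proof.
move=> pivR pivU i.
have t_rdeg j : s j + pdeg (R j j) = rdeg s (row j R).
  by case: (pivR j) => _ <- _; rewrite mxE addrC.
have [piv_UR deg_UR] := pivot_mulmx pivR t_rdeg (pivU i).
by split; [rewrite row_mul | move: deg_UR; rewrite -row_mul ![(row _ _) _ _]mxE].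
Qed.

Lemma pivot_diag_pdeg_le m (s : 'I_m -> int) (R1 R2 : 'M[{poly K}]_m) :
  (forall i, is_pivot s (row i R1) i) -> (forall i, is_pivot s (row i R2) i) ->
  (forall i, exists u, row i R1 = u *m R2) ->
  forall i, pdeg (R2 i i) <= pdeg (R1 i i).
Proof.
move=> piv1 piv2 span i; have [u row_i] := span i.
have u_nz : u != 0.
  by apply/eqP => u0; case: (piv1 i); rewrite row_i u0 mul0mx mxE eqxx.
have [i0 piv_u] := exists_pivot (fun j => rdeg s (row j R2)) u_nz.
have [piv_uR deg_uR] := pivot_mulmx piv2 (fun => erefl) piv_u.
have i0_eq : i0 = i by apply: pivot_uniq _ (piv1 i); rewrite row_i.
by move: deg_uR; rewrite i0_eq -row_i mxE => ->; rewrite lerDr pdeg_ge0.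
Qed.

Lemma interp_basis_pivot_diag_pdeg m n (E : 'M[K]_(m, n)) (J : 'M[K]_n)
    (s : 'I_m -> int) (P Q : 'M[{poly K}]_m) :
  interp_basis E J P -> interp_basis E J Q ->
  (forall i, is_pivot s (row i P) i) -> (forall i, is_pivot s (row i Q) i) ->
  forall i, pdeg (P i i) = pdeg (Q i i).
Proof.
have span A B : interp_basis E J A -> interp_basis E J B ->
    forall i, exists u, row i A = u *m B.
  by move=> [interpA _ _] [_ spanB _] i; apply: spanB.
move=> basisP basisQ pivP pivQ i.
apply/eqP; rewrite eq_le (pivot_diag_pdeg_le pivQ pivP (span _ _ basisQ basisP)).
by rewrite (pivot_diag_pdeg_le pivP pivQ (span _ _ basisP basisQ)).
Qed.

End Pivots.

Theorem mainTheorem6 (K : fieldType) (m sigma : nat)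
    (E : 'M[K]_(m, sigma)) (J : 'M[K]_sigma) (s : 'I_m -> int)
    (P1 P2 : 'M[{poly K}]_m) :
  (2 <= sigma)%N -> upper_tri J ->
  let Es := castmx (erefl m, half_split sigma) E in
  let Js := castmx (half_split sigma, half_split sigma) J in
  let E1 := lsubmx Es in
  let J1 := ulsubmx Js in
  let J2 := drsubmx Js in
  popov_basis s E1 J1 P1 ->
  let delta1 := diagdeg P1 in
  let E2 := rsubmx (castmx (erefl m, half_split sigma) (applymx J P1 E)) in
  let s2 := fun i => s i + (delta1 i)%:Z in
  popov_basis s2 E2 J2 P2 ->
  let delta2 := diagdeg P2 in
  [/\ interp_basis E J (P2 *m P1),
      sreduced s (P2 *m P1)
    & forall P, popov_basis s E J P -> forall i, diagdeg P i = (delta1 i + delta2 i)%N].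
Proof.
move=> _ J_upper Es Js E1 J1 J2 [basis1 [det1 piv1 _ _]] delta1 E2 s2
  [basis2 [det2 piv2 _ _]] delta2.
have piv12 := pivot_diag_mulmx piv1 piv2.
have basis12 := interp_basis_mul_castmx J_upper basis1 basis2.
split=> //.
  split; first by rewrite det_mulmx mulf_neq0.
  by apply: lmat_diag_pivot_row_free => i; case: (piv12 i).
move=> P [basisP [_ pivP _ _]] i.
have := interp_basis_pivot_diag_pdeg basisP basis12 pivP (fun i => (piv12 i).1) i.
by rewrite (piv12 i).2 addrC -PoszD => -[].
Qed.
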